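(* Let $Q_k^A,Q_k^B$ be the SDQ iterates and $w_k^A,w_k^B$ the associated noise vectors (see context). Define the lower comparison system \[ Q_{k+1}^{A_L}-Q^*=(I+\alpha\gamma DP\Pi_{Q^*}-\alpha D)(Q_k^{A_L}-Q^* )+\alpha\gamma DP(\Pi_{Q_k^B}-\Pi_{Q^*})(Q_k^A-Q_k^B)+\alpha w_k^A, \] \[ Q_{k+1}^{B_L}-Q^*=(I+\alpha\gamma DP\Pi_{Q^*}-\alpha D)(Q_k^{B_L}-Q^* )+\alpha\gamma DP(\Pi_{Q^*}-\Pi_{Q_k^A})(Q_k^A-Q_k^B)+\alpha w_k^B, \] with arbitrary initial vectors $Q_0^{A_L},Q_0^{B_L}\in\mathbb{R}^{|\mathcal{S}||\mathcal{A}|}$. Suppose $Q_0^{A_L}-Q^*\le Q_0^A-Q^*$ and $Q_0^{B_L}-Q^*\le Q_0^B-Q^*$ element-wise. Then for all $k\ge0$, $Q_k^{A_L}-Q^*\le Q_k^A-Q^*$ and $Q_k^{B_L}-Q^*\le Q_k^B-Q^*$ element-wise.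
   Context: Finite MDP with states $\mathcal{S}=\{1,\dots,|\mathcal{S}|\}$, actions $\mathcal{A}=\{1,\dots,|\mathcal{A}|\}$, transitions $P(s'|s,a)$, bounded deterministic reward $r(s,a,s')$, discount $\gamma\in(0,1)$, optimal action-value function $Q^*$. Sampling distribution $d(s,a)>0$ on $\mathcal{S}\times\mathcal{A}$; at iteration $k$, $(s_k,a_k)\sim d$ i.i.d., $s_k'\sim P(\cdot|s_k,a_k)$, $r_{k+1}=r(s_k,a_k,s_k')$. Constant step-size $\alpha\in(0,1)$. SDQ: only entry $(s_k,a_k)$ is updated, $Q_{k+1}^A(s_k,a_k)=Q_k^A(s_k,a_k)+\alpha\{r_{k+1}+\gamma Q_k^A(s_k',\arg\max_aQ_k^B(s_k',a))-Q_k^A(s_k,a_k)\}$ and symmetrically for $B$ with roles of $A,B$ swapped. Vector notation: $Q\in\mathbb{R}^{|\mathcal{S}||\mathcal{A}|}$ stacks $Q(\cdot,1),\dots,Q(\cdot,|\mathcal{A}|)$, so $Q(s,a)=(e_a\otimes e_s)^TQ$. $D$ is the diagonal matrix with entry $d(s,a)$ at position $(s,a)$. $P\in\mathbb{R}^{|\mathcal{S}||\mathcal{A}|\times|\mathcal{S}|}$ has row $(s,a)$ equal to $P(\cdot|s,a)$. $R(s,a)=\mathbb{E}[r(s,a,s')|s,a]$. For $Q$, $\pi_Q(s)=\arg\max_aQ(s,a)$ (fixed tie-breaking) and $\Pi_Q\in\mathbb{R}^{|\mathcal{S}|\times|\mathcal{S}||\mathcal{A}|}$ has $s$-th row $e_{\pi_Q(s)}^T\otimes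 e_s^T$. Noise: $w_k^A=(e_{a_k}\otimes e_{s_k})r_{k+1}+\gamma(e_{a_k}\otimes e_{s_k})e_{s_k'}^T\Pi_{Q_k^B}Q_k^A-(e_{a_k}\otimes e_{s_k})(e_{a_k}\otimes e_{s_k})^TQ_k^A-(DR+\gamma DP\Pi_{Q_k^B}Q_k^A-DQ_k^A)$, and $w_k^B$ is the same with $A$ and $B$ swapped. Inequalities between vectors are element-wise. *)

(* A vector in R^{|S||A|} is represented as a function S -> A -> R
   (entry (s,a) = (e_a \otimes e_s)^T Q); a vector in R^{|S|} as S -> R.
   Matrices D, P, Pi_Q are represented by the linear maps they denote. *)
From HB Require Import structures.
From mathcomp Require Import all_boot all_order all_algebra.
From mathcomp Require Import reals.
Set Implicit Arguments. Unset Strict Implicit. Unset Printing Implicit Defensive.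
Import Order.TTheory GRing.Theory Num.Theory.
Local Open Scope ring_scope.

Section SDQ.
Variables (R : realType) (S A : finType).

Definition qvec := S -> A -> R.

(* a greedy selector: greedy Q s is an argmax_a Q(s,a), with a fixed
   (arbitrary) tie-breaking rule encoded by the function itself *)
Definition is_greedy (greedy : qvec -> S -> A) :=
  forall (Q : qvec) s a, Q s a <= Q s (greedy Q s).

Definition Dop (d : qvec) (x : qvec) : qvec := fun s a => d s a * x s a.
Definition Pop (P : S -> A -> S -> R) (v : S -> R) : qvec :=
  fun s a => \sum_(s' : S) P s a s' * v s'.
Definition Piop (greedy : qvec -> S -> A) (Q : qvec) (x : qvec) : S -> R :=
  fun s => x s (greedy Q s).

Definition vadd (x y : qvec) : qvec := fun s a => x s a + y s a.
Definition vsub (x y : qvec) : qvec := fun s a => x s a - y s a.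
Definition vscale (c : R) (x : qvec) : qvec := fun s a => c * x s a.
Definition vle (x y : qvec) : Prop := forall s a, x s a <= y s a.

Definition Rexp (P : S -> A -> S -> R) (r : S -> A -> S -> R) : qvec :=
  fun s a => \sum_(s' : S) P s a s' * r s a s'.

(* Q* : the optimal action-value function, characterised as the solution of
   the Bellman optimality equation Q*(s,a) = R(s,a) + gamma sum_s' P(s'|s,a) max_a' Q*(s',a') *)
Definition bellman_optimal (greedy : qvec -> S -> A) (P : S -> A -> S -> R)
  (r : S -> A -> S -> R) (gamma : R) (Qs : qvec) : Prop :=
  forall s a, Qs s a = Rexp P r s a + gamma * \sum_(s' : S) P s a s' * Qs s' (greedy Qs s').

Variables (greedy : qvec -> S -> A) (d : qvec) (P : S -> A -> S -> R)
  (r : S -> A -> S -> R) (gamma alpha : R)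
  (sk : nat -> S) (ak : nat -> A) (sk' : nat -> S).

Definition ek (k : nat) : qvec := fun s a => if (s == sk k) && (a == ak k) then 1 else 0.

Definition sdq_upd (k : nat) (QA QB : qvec) : qvec := fun s a =>
  if (s == sk k) && (a == ak k) then
    QA s a + alpha * (r (sk k) (ak k) (sk' k) + gamma * QA (sk' k) (greedy QB (sk' k)) - QA s a)
  else QA s a.

Fixpoint sdq (QA0 QB0 : qvec) (k : nat) : qvec * qvec :=
  match k with
  | 0 => (QA0, QB0)
  | k'.+1 => let: (qa, qb) := sdq QA0 QB0 k' in (sdq_upd k' qa qb, sdq_upd k' qb qa)
  end.

(* noise w_k (for w_k^A take QA = Q_k^A, QB = Q_k^B; for w_k^B swap) :
   e r_{k+1} + gamma e e_{s'}^T Pi_{QB} QA - e e^T QA - (D R + gamma D P Pi_{QB} QA - D QA) *)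
Definition noise (k : nat) (QA QB : qvec) : qvec := fun s a =>
  ek k s a * r (sk k) (ak k) (sk' k)
  + gamma * (ek k s a * QA (sk' k) (greedy QB (sk' k)))
  - ek k s a * QA s a
  - (Dop d (Rexp P r) s a
     + gamma * Dop d (Pop P (Piop greedy QB QA)) s a
     - Dop d QA s a).

Definition Tmat (Qs : qvec) (x : qvec) : qvec := fun s a =>
  x s a + alpha * gamma * Dop d (Pop P (Piop greedy Qs x)) s a - alpha * Dop d x s a.

Definition corr (Q1 Q2 : qvec) (x : qvec) : qvec := fun s a =>
  alpha * gamma * Dop d (Pop P (fun s' => Piop greedy Q1 x s' - Piop greedy Q2 x s')) s a.

Fixpoint lower (Qs QA0 QB0 QAL0 QBL0 : qvec) (k : nat) : qvec * qvec :=
  match k with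
  | 0 => (QAL0, QBL0)
  | k'.+1 =>
    let: (qal, qbl) := lower Qs QA0 QB0 QAL0 QBL0 k' in
    let: (qa, qb) := sdq QA0 QB0 k' in
    (vadd Qs (vadd (vadd (Tmat Qs (vsub qal Qs)) (corr qb Qs (vsub qa qb)))
                   (vscale alpha (noise k' qa qb))),
     vadd Qs (vadd (vadd (Tmat Qs (vsub qbl Qs)) (corr Qs qa (vsub qa qb)))
                   (vscale alpha (noise k' qb qa))))
  end.

End SDQ.

From HB Require Import structures.
From mathcomp Require Import all_boot all_order all_algebra.
From mathcomp Require Import reals ring lra.
Import Order.TTheory GRing.Theory Num.Theory.
Local Open Scope ring_scope.

(* Subtracting the lower system from SDQ, the noise and the reward cancel (the
   latter by the Bellman equation), and the gap [Q^A - Q^{A_L}] evolves as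
   [(I - alpha D)] applied to the previous gap plus [alpha gamma D P] applied
   to the vector with entry
   [(Q^B(s', pi_B s') - Q^B(s', pi* s')) + (Q^A - Q^{A_L})(s', pi* s')] at [s'].
   The first bracket is nonnegative because [pi_B] is greedy for [Q^B], the
   second by induction, and all coefficients are nonnegative as [alpha d <= 1]. *)

Lemma ler_sum_term {R : numDomainType} {I : finType} {F : I -> R} (i : I) :
  (forall j, 0 <= F j) -> F i <= \sum_j F j.
Proof.
move=> F_ge0; rewrite (bigD1 i) //= lerDl.
by apply: sumr_ge0 => j _; apply: F_ge0.
Qed.

Section LowerComparison.
Variables (R : realType) (S A : finType).
Variables (greedy : qvec R S A -> S -> A) (d : qvec R S A) (P : S -> A -> S -> R)
  (r : S -> A -> S -> R) (gamma alpha : R) (Qs : qvec R S A)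
  (sk : nat -> S) (ak : nat -> A) (sk' : nat -> S).

Definition lower_upd (k : nat) (qal qa qb c : qvec R S A) : qvec R S A :=
  vadd Qs (vadd (vadd (Tmat greedy d P gamma alpha Qs (vsub qal Qs)) c)
                (vscale alpha (noise greedy d P r gamma sk ak sk' k qa qb))).

Lemma corr_swap (Q1 Q2 x y : qvec R S A) s a :
  corr greedy d P gamma alpha Q1 Q2 (vsub x y) s a
  = corr greedy d P gamma alpha Q2 Q1 (vsub y x) s a.
Proof.
rewrite /corr /Dop /Pop /Piop /vsub; congr (_ * (_ * _)).
by apply: eq_bigr => s' _; congr (_ * _); ring.
Qed.

Hypothesis Qs_optimal : bellman_optimal greedy P r gamma Qs.

(* By construction of the noise, the SDQ step is its expected step plus
   [alpha w]; the Bellman equation then removes the reward. *)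
Lemma sdq_upd_sub_lower_upd k (qal qa qb : qvec R S A) s a :
  sdq_upd greedy r gamma alpha sk ak sk' k qa qb s a
  - lower_upd k qal qa qb (corr greedy d P gamma alpha qb Qs (vsub qa qb)) s a
  = (1 - alpha * d s a) * (qa s a - qal s a)
    + alpha * gamma * d s a * \sum_(s' : S) P s a s' *
        ((qb s' (greedy qb s') - qb s' (greedy Qs s'))
         + (qa s' (greedy Qs s') - qal s' (greedy Qs s'))).
Proof.
rewrite /lower_upd /sdq_upd /corr /Tmat /noise /vadd /vsub /vscale /Dop /Pop /Piop /ek.
have -> : Rexp P r s a = Qs s a - gamma * \sum_(s' : S) P s a s' * Qs s' (greedy Qs s').
  by rewrite (Qs_optimal s a); ring.
set SA := \sum_(s' : S) P s a s' * qa s' (greedy qb s').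
set SQ := \sum_(s' : S) P s a s' * Qs s' (greedy Qs s').
set SL := \sum_(s' : S) P s a s' * (qal s' (greedy Qs s') - Qs s' (greedy Qs s')).
set SC := \sum_(s' : S) P s a s' * _.
set SG := \sum_(s' : S) P s a s' * _.
have -> : SG = SA - SQ - SL - SC.
  by rewrite /SG /SA /SQ /SL /SC -!sumrB; apply: eq_bigr => s' _; ring.
by case: ifP => _; ring.
Qed.

Hypotheses (greedy_max : is_greedy greedy) (P_ge0 : forall s a s', 0 <= P s a s')
  (d_ge0 : forall s a, 0 <= d s a) (gamma_ge0 : 0 <= gamma) (alpha_ge0 : 0 <= alpha)
  (alpha_d_le1 : forall s a, alpha * d s a <= 1).

Lemma lower_upd_le_sdq_upd k (qal qa qb c : qvec R S A) :
  vle (vsub qal Qs) (vsub qa Qs) ->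
  (forall s a, c s a = corr greedy d P gamma alpha qb Qs (vsub qa qb) s a) ->
  vle (vsub (lower_upd k qal qa qb c) Qs)
      (vsub (sdq_upd greedy r gamma alpha sk ak sk' k qa qb) Qs).
Proof.
move=> qal_le_qa c_corr s a; rewrite /vsub lerD2r -subr_ge0.
have -> : lower_upd k qal qa qb c s a
          = lower_upd k qal qa qb (corr greedy d P gamma alpha qb Qs (vsub qa qb)) s a.
  by rewrite /lower_upd /vadd c_corr.
rewrite sdq_upd_sub_lower_upd; apply: addr_ge0.
  apply: mulr_ge0; first by rewrite subr_ge0.
  by have := qal_le_qa s a; rewrite /vsub; lra.
apply: mulr_ge0; first by rewrite !mulr_ge0.
apply: sumr_ge0 => s' _; apply: mulr_ge0 => //.
have := greedy_max qb s' (greedy Qs s'); have := qal_le_qa s' (greedy Qs s').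
rewrite /vsub; lra.
Qed.

End LowerComparison.

Theorem proposition2 (R : realType) (S A : finType)
  (greedy : qvec R S A -> S -> A) (d : qvec R S A) (P : S -> A -> S -> R)
  (r : S -> A -> S -> R) (gamma alpha : R) (Qs : qvec R S A)
  (sk : nat -> S) (ak : nat -> A) (sk' : nat -> S)
  (QA0 QB0 QAL0 QBL0 : qvec R S A) :
  is_greedy greedy ->
  (forall s a, 0 < d s a) -> \sum_(s : S) \sum_(a : A) d s a = 1 ->
  (forall s a s', 0 <= P s a s') -> (forall s a, \sum_(s' : S) P s a s' = 1) ->
  0 < gamma < 1 -> 0 < alpha < 1 ->
  bellman_optimal greedy P r gamma Qs ->
  vle (vsub QAL0 Qs) (vsub QA0 Qs) -> vle (vsub QBL0 Qs) (vsub QB0 Qs) ->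
  forall k : nat,
    vle (vsub (lower greedy d P r gamma alpha sk ak sk' Qs QA0 QB0 QAL0 QBL0 k).1 Qs)
        (vsub (sdq greedy r gamma alpha sk ak sk' QA0 QB0 k).1 Qs) /\
    vle (vsub (lower greedy d P r gamma alpha sk ak sk' Qs QA0 QB0 QAL0 QBL0 k).2 Qs)
        (vsub (sdq greedy r gamma alpha sk ak sk' QA0 QB0 k).2 Qs).
Proof.
move=> greedy_max d_gt0 d_sum1 P_ge0 _ /andP[/ltW gamma_ge0 _] /andP[/ltW alpha_ge0 alpha_lt1].
move=> Qs_optimal init_leA init_leB k.
have d_ge0 s a : 0 <= d s a by apply: ltW.
have alpha_d_le1 s a : alpha * d s a <= 1.
  have d_le1 : d s a <= 1.
    rewrite -d_sum1 (le_trans (ler_sum_term a (d_ge0 s))) //.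
    by apply: (ler_sum_term (F := fun t => \sum_b d t b)) => t; apply: sumr_ge0.
  by apply: mulr_ile1 => //; apply: ltW.
elim: k => [|k [IHA IHB]] //=.
case: (lower greedy d P r gamma alpha sk ak sk' Qs QA0 QB0 QAL0 QBL0 k) IHA IHB => qal qbl.
case: (sdq greedy r gamma alpha sk ak sk' QA0 QB0 k) => qa qb /= IHA IHB.
(* The B-component is the A-component with A and B exchanged, up to [corr_swap]. *)
by split; apply: lower_upd_le_sdq_upd => // s a; rewrite corr_swap.
Qed.
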